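(* Let $f\in A[X]$ be monic with discriminant $\Delta=\mathrm{Res}_X(f,f')\neq 0$, $r=v(\Delta)$, and let $N>2r$ be an integer. Then the number of roots in $A/\pi^NA$ of the reduction $f_N$ of $f$ modulo $\pi^N$ is at most $q^{r+\lfloor r/2\rfloor+1}$.
   Context: $K$ is a field complete with respect to a non-archimedean discrete valuation $v$, normalized by $v(\pi)=1$ for a uniformizer $\pi$ of the valuation ring $A=\{x\in K: v(x)\geq 0\}$; the residue field $A/\pi A$ is finite with $q$ elements. *)

From HB Require Import structures.
From mathcomp Require Import all_boot all_order all_algebra.
Set Implicit Arguments. Unset Strict Implicit. Unset Printing Implicit Defensive.
Import Order.TTheory GRing.Theory Num.Theory.
Local Open Scope ring_scope.

(* A discrete valuation is encoded by v : K -> int on nonzero elements;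
   the value v 0 is irrelevant (v(0) = +oo by convention), which is handled
   through the predicate [vge]. *)

Definition vge (K : fieldType) (v : K -> int) (x : K) (n : int) : Prop :=
  x = 0 \/ n <= v x.

Definition inA (K : fieldType) (v : K -> int) (x : K) : Prop := vge v x 0.

Definition is_normalized_dval (K : fieldType) (v : K -> int) (pi : K) : Prop :=
  [/\ (forall x y : K, x != 0 -> y != 0 -> v (x * y) = v x + v y),
      (forall x y : K, x != 0 -> y != 0 -> x + y != 0 ->
         Num.min (v x) (v y) <= v (x + y)),
      pi != 0 & v pi = 1].

Definition dval_complete (K : fieldType) (v : K -> int) : Prop :=
  forall u : nat -> K,
    (forall n : int, exists m : nat, forall i j : nat,
        (m <= i)%N -> (m <= j)%N -> vge v (u i - u j) n) ->
    exists l : K, forall n : int, exists m : nat, forall i : nat,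
        (m <= i)%N -> vge v (u i - l) n.

(* The residue field A / pi A has exactly q elements: there is a complete
   system of q pairwise incongruent representatives in A. *)
Definition residue_card (K : fieldType) (v : K -> int) (q : nat) : Prop :=
  exists reps : seq K,
    [/\ size reps = q,
        (forall a, a \in reps -> inA v a),
        (forall i j : nat, (i < j < size reps)%N ->
            ~ vge v (nth 0 reps i - nth 0 reps j) 1) &
        (forall x : K, inA v x -> exists2 a, a \in reps & vge v (x - a) 1)].

(* A finite family s of elements of A representing pairwise distinct roots
   in A / pi^N A of f reduced mod pi^N. *)
Definition distinct_roots_mod (K : fieldType) (v : K -> int) (f : {poly K})
    (N : nat) (s : seq K) : Prop :=
  [/\ (forall x, x \in s -> inA v x),
      (forall x, x \in s -> vge v f.[x] N%:Z) &
      (forall i j : nat, (i < j < size s)%N ->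
          ~ vge v (nth 0 s i - nth 0 s j) N%:Z)].

(* Write h = r/2 (rounded down).  Column operations on the Sylvester matrix
   show that for a root x of f mod pi^N one has
   v(Res(f, f')) >= min(N, 2 v(f'(x))); since r < N this gives v(f'(x)) <= h.
   By Taylor's formula, two roots congruent mod pi^(h+1) are then congruent
   mod pi^(N-h), so each residue class mod pi^(h+1) contains at most q^h roots
   (one per class mod pi^N), and there are at most q^(h+1) such classes.  The
   bound q^(2h+1) <= q^(r+h+1) follows. *)

From HB Require Import structures.
From mathcomp Require Import all_boot all_order all_algebra.
From mathcomp Require Import zify ring.
Set Implicit Arguments. Unset Strict Implicit. Unset Printing Implicit Defensive.
Import Order.TTheory GRing.Theory Num.Theory.
Local Open Scope ring_scope.

Section SetColumn.
Variables (R : comNzRingType) (n : nat).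
Implicit Types (A : 'M[R]_n) (X c : 'I_n -> R).

Definition set_col A j X : 'M[R]_n :=
  \matrix_(i, k) if k == j then X i else A i k.

Lemma det_set_col A j X : \det (set_col A j X) = \sum_i X i * cofactor A i j.
Proof.
rewrite (expand_det_col _ j); apply: eq_bigr => i _; rewrite mxE eqxx.
congr (_ * (_ * \det _)); apply/matrixP => a b; rewrite !mxE.
by rewrite eq_sym (negPf (neq_lift _ _)).
Qed.

Lemma sum_mul_cofactor A j k :
  \sum_i A i k * cofactor A i j = (k == j)%:R * \det A.
Proof.
have := congr1 (fun M : 'M_n => M j k) (mul_adj_mx A).
rewrite !mxE mulr_natl eq_sym => <-.
by apply: eq_bigr => i _; rewrite mxE mulrC.
Qed.

Lemma det_set_col_comb A j c : c j = 1 ->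
  \det (set_col A j (fun i => \sum_k A i k * c k)) = \det A.
Proof.
move=> cj1; rewrite det_set_col.
transitivity (\sum_k c k * \sum_i A i k * cofactor A i j).
  under eq_bigr do rewrite mulr_suml.
  rewrite exchange_big; apply: eq_bigr => k _; rewrite mulr_sumr.
  by apply: eq_bigr => i _; ring.
rewrite (bigD1 j) //= sum_mul_cofactor eqxx cj1 !mul1r big1 ?addr0 // => k kj.
by rewrite sum_mul_cofactor (negPf kj) mul0r mulr0.
Qed.

Lemma sum_set_col A j X c i : c j = 0 ->
  \sum_k set_col A j X i k * c k = \sum_k A i k * c k.
Proof.
by move=> cj0; apply: eq_bigr => k _; rewrite mxE; case: eqP => // ->; rewrite cj0 !mulr0.
Qed.

End SetColumn.

Lemma horner_deriv_coef_wide (R : comNzRingType) n (p : {poly R}) x :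
  (size p <= n)%N -> p^`().[x] = \sum_(j < n) p`_j * (x ^+ j.-1 *+ j).
Proof.
case: n => [|n] h.
  by move: h; rewrite leqn0 size_poly_eq0 => /eqP ->; rewrite big_ord0 deriv0 horner0.
have hd : (size p^`() <= n)%N.
  case: (eqVneq p 0) => [->|p0]; first by rewrite deriv0 size_poly0.
  by rewrite -ltnS (leq_trans (lt_size_deriv p0) h).
rewrite (horner_coef_wide _ hd) big_ord_recl /= mulr0n mulr0 add0r.
by apply: eq_bigr => i _; rewrite coef_deriv mulrnAr mulrnAl.
Qed.

(* The column operations C_i0 += sum_k x^k C_k and C_i1 += sum_k k x^(k-1) C_k. *)
Lemma det_coef_mx_jet (R : comNzRingType) n (S : 'M[R]_n)
    (P : 'I_n -> {poly R}) x (i0 i1 : 'I_n) :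
  i0 = 0%N :> nat -> i1 = 1%N :> nat ->
  (forall i j, S i j = (P i)`_j) -> (forall i, size (P i) <= n)%N ->
  \det S = \det (set_col (set_col S i0 (fun i => (P i).[x]))
                         i1 (fun i => (P i)^`().[x])).
Proof.
move=> e0 e1 hS hP.
rewrite -[LHS](@det_set_col_comb _ _ S i0 (fun k => x ^+ k)); last by rewrite e0.
rewrite -[LHS](@det_set_col_comb _ _ _ i1 (fun k => x ^+ k.-1 *+ k)); last first.
  by rewrite e1 mulr1n.
congr (\det _); apply/matrixP => i k; rewrite !mxE.
case: eqP => _; last case: eqP => // _.
  rewrite sum_set_col ?e0 ?mulr0n // (horner_deriv_coef_wide _ (hP i)).
  by apply: eq_bigr => j _; rewrite hS.
by rewrite (horner_coef_wide _ (hP i)); apply: eq_bigr => j _; rewrite hS.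
Qed.

Lemma size_le_sum_count (T : eqType) (S : Type) (P : S -> pred T)
    (reps : seq S) (s : seq T) :
  {in s, forall y, has (P ^~ y) reps} ->
  (size s <= \sum_(a <- reps) count (P a) s)%N.
Proof.
elim: s => [|y s IH] hs //=; rewrite big_split /=.
have -> : \sum_(a <- reps) (P a y : nat) = count (P ^~ y) reps.
  by rewrite -sumn_count sumnE big_map.
rewrite -add1n leq_add // ?IH -?has_count ?hs ?mem_head // => z zs.
by apply: hs; rewrite inE zs orbT.
Qed.

Section Valuation.
Variables (K : fieldType) (v : K -> int) (pi : K).
Hypothesis hv : is_normalized_dval v pi.

Lemma vge_le x (k l : int) : l <= k -> vge v x k -> vge v x l.
Proof. by move=> lk [->|h]; [left|right; apply: le_trans h]. Qed.

Lemma vge0 k : vge v 0 k.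
Proof. by left. Qed.

Lemma vge_val x : x != 0 -> vge v x (v x).
Proof. by right. Qed.

Lemma dval1 : v 1 = 0.
Proof.
case: hv => hm _ _ _; have := hm 1 1 (oner_neq0 _) (oner_neq0 _).
by rewrite mulr1 => h; lia.
Qed.

Lemma dvalN x : x != 0 -> v (- x) = v x.
Proof.
move=> x0; case: hv => hm _ _ _.
have n1 : (-1 : K) != 0 by rewrite oppr_eq0 oner_neq0.
have := hm _ _ n1 n1; rewrite mulrNN mulr1 dval1 => h.
by have := hm _ _ n1 x0; rewrite mulN1r => ->; lia.
Qed.

Lemma vgeN x k : vge v x k -> vge v (- x) k.
Proof.
case: (eqVneq x 0) => [->|x0]; first by rewrite oppr0.
by case=> [/eqP|h]; [rewrite (negPf x0) | right; rewrite dvalN].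
Qed.

Lemma vgeD x y k : vge v x k -> vge v y k -> vge v (x + y) k.
Proof.
case=> [->|hx]; first by rewrite add0r.
case=> [->|hy]; first by rewrite addr0; right.
case: (eqVneq x 0) => [->|x0]; first by rewrite add0r; right.
case: (eqVneq y 0) => [->|y0]; first by rewrite addr0; right.
case: (eqVneq (x + y) 0) => [->|s0]; first by left.
right; case: hv => _ hu _ _; apply: le_trans (hu _ _ x0 y0 s0).
by rewrite le_min hx hy.
Qed.

Lemma vgeB x y k : vge v x k -> vge v y k -> vge v (x - y) k.
Proof. by move=> hx /vgeN; apply: vgeD. Qed.

Lemma vgeM x y k l : vge v x k -> vge v y l -> vge v (x * y) (k + l).
Proof.
case=> [->|hx]; first by rewrite mul0r; left.
case=> [->|hy]; first by rewrite mulr0; left.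
case: (eqVneq x 0) => [->|x0]; first by rewrite mul0r; left.
case: (eqVneq y 0) => [->|y0]; first by rewrite mulr0; left.
by right; case: hv => hm _ _ _; rewrite hm // lerD.
Qed.

Lemma vgeMl x y k : inA v x -> vge v y k -> vge v (x * y) k.
Proof. by move=> hx /(vgeM hx); rewrite add0r. Qed.

Lemma vgeMr x y k : vge v x k -> inA v y -> vge v (x * y) k.
Proof. by move=> hx /(vgeM hx); rewrite addr0. Qed.

Lemma vge_sum (I : Type) (r : seq I) (P : pred I) (F : I -> K) k :
  (forall i, P i -> vge v (F i) k) -> vge v (\sum_(i <- r | P i) F i) k.
Proof. by move=> h; elim/big_rec: _ => [|i x /h]; [left | apply: vgeD]. Qed.

Lemma vgeMn x n k : vge v x k -> vge v (x *+ n) k.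
Proof.
by move=> hx; elim: n => [|n]; [left; rewrite mulr0n | rewrite mulrS; apply: vgeD].
Qed.

Lemma inA1 : inA v 1.
Proof. by right; rewrite dval1. Qed.

Lemma inA_prod (I : Type) (r : seq I) (P : pred I) (F : I -> K) :
  (forall i, P i -> inA v (F i)) -> inA v (\prod_(i <- r | P i) F i).
Proof. by move=> h; elim/big_rec: _ => [|i x /h]; [exact: inA1 | apply: vgeMl]. Qed.

Lemma inAX x n : inA v x -> inA v (x ^+ n).
Proof.
move=> hx; elim: n => [|n]; first by rewrite expr0; apply: inA1.
by rewrite exprS; apply: vgeMl.
Qed.

Lemma dval_piX m : pi ^+ m != 0 /\ v (pi ^+ m) = m%:Z.
Proof.
case: (hv) => hm _ p0 vp; elim: m => [|m [IH1 IH2]].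
  by rewrite expr0 oner_neq0 dval1.
by rewrite exprS mulf_neq0 // hm // vp IH2; split => //; lia.
Qed.

Lemma vge_piX_dvd w (m : nat) : vge v w m%:Z -> exists2 z, inA v z & w = pi ^+ m * z.
Proof.
have [p0 vp] := dval_piX m.
case: (eqVneq w 0) => [-> _|w0]; first by exists 0; [left | rewrite mulr0].
case=> [/eqP|hw]; first by rewrite (negPf w0).
exists (w / pi ^+ m); last by rewrite mulrC divfK.
have z0 : w / pi ^+ m != 0 by rewrite mulf_neq0 // invr_eq0.
right; case: hv => hm _ _ _; have := hm _ _ p0 z0; rewrite mulrC divfK // vp; lia.
Qed.

Lemma inA_horner (p : {poly K}) x :
  (forall i, inA v p`_i) -> inA v x -> inA v p.[x].
Proof.
move=> hp hx; rewrite horner_coef; apply: vge_sum => i _.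
by apply: vgeMl; [apply: hp | apply: inAX].
Qed.

Lemma inA_coef_nderivn (p : {poly K}) n :
  (forall i, inA v p`_i) -> forall i, inA v p^`N(n)`_i.
Proof. by move=> hp i; rewrite coef_nderivn; apply: vgeMn; apply: hp. Qed.

Lemma inA_coef_deriv (p : {poly K}) :
  (forall i, inA v p`_i) -> forall i, inA v p^`()`_i.
Proof. by rewrite -nderivn1; apply: inA_coef_nderivn. Qed.

Lemma inA_det n (A : 'M[K]_n) : (forall i j, inA v (A i j)) -> inA v (\det A).
Proof.
move=> hA; apply: vge_sum => s _; apply: vgeMl; last by apply: inA_prod.
by apply: inAX; apply: vgeN; apply: inA1.
Qed.

Lemma inA_cofactor n (A : 'M[K]_n) i j :
  (forall i k, k != j -> inA v (A i k)) -> inA v (cofactor A i j).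
Proof.
move=> hA; apply: vgeMl; first by apply: inAX; apply: vgeN; apply: inA1.
by apply: inA_det => a b; rewrite !mxE; apply: hA; rewrite eq_sym neq_lift.
Qed.

Lemma vge_sum_mul_cofactor n (A : 'M[K]_n) j (X : 'I_n -> K) k :
  (forall i l, l != j -> inA v (A i l)) -> (forall i, vge v (X i) k) ->
  vge v (\sum_i X i * cofactor A i j) k.
Proof.
by move=> hA hX; apply: vge_sum => i _; apply: vgeMr; last exact: inA_cofactor.
Qed.

(* Expanding along column [i0] gives [c * _ + a * _]; in the second
   determinant column [i0] is [W], so the [b W] part of column [i1] drops
   out and what remains has valuation [>= m + min m N]. *)
Lemma vge_det_jet n (M : 'M[K]_n) (i0 i1 : 'I_n) (c a b : K)
    (U W D : 'I_n -> K) (N m : int) :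
  i1 != i0 -> 0 <= m -> 0 <= N ->
  vge v c N -> vge v a m -> inA v b ->
  (forall i, inA v (U i)) -> (forall i, inA v (W i)) ->
  (forall i, vge v (D i) (Num.min m N)) ->
  (forall i k, k != i0 -> k != i1 -> inA v (M i k)) ->
  (forall i, M i i0 = c * U i + a * W i) ->
  (forall i, M i i1 = b * W i + D i) ->
  vge v (\det M) (Num.min N (m + m)).
Proof.
move=> i10 m0 N0 hc ha hb hU hW hD hM hM0 hM1.
have hmin : 0 <= Num.min m N by rewrite le_min m0 N0.
have hM1A i : inA v (M i i1).
  by rewrite hM1; apply: vgeD; [apply: vgeMl hb (hW i) | apply: vge_le hmin (hD i)].
have hMi0 i k : k != i0 -> inA v (M i k).
  by case: (eqVneq k i1) => [-> _|k1 k0]; [apply: hM1A | apply: hM].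
pose B := set_col M i0 W.
have hBi1 i k : k != i1 -> inA v (B i k).
  by move=> k1; rewrite mxE; case: eqP => [_|/eqP k0]; [apply: hW | apply: hMi0].
have dB : \det B = \sum_i D i * cofactor B i i1.
  rewrite (expand_det_col _ i1).
  transitivity (b * \sum_i B i i0 * cofactor B i i1 + \sum_i D i * cofactor B i i1).
    rewrite mulr_sumr -big_split; apply: eq_bigr => i _.
    by rewrite !mxE (negPf i10) eqxx hM1 /=; ring.
  by rewrite sum_mul_cofactor eq_sym (negPf i10) mul0r mulr0 add0r.
rewrite (expand_det_col _ i0).
under eq_bigr do rewrite hM0 mulrDl -!mulrA.
rewrite big_split -!mulr_sumr -(det_set_col M i0 W) -/B dB.
apply: vgeD.
  apply: vge_le _ (vgeMr hc (vge_sum_mul_cofactor hMi0 hU)).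
  by rewrite ge_min lexx.
apply: vge_le _ (vgeM ha (vge_sum_mul_cofactor hBi1 hD)).
by case: (lerP m N) => mN; lia.
Qed.

Lemma vge_resultant_deriv (f : {poly K}) x (N m : int) :
  (forall i, inA v f`_i) -> (2 < size f)%N -> 0 <= m -> 0 <= N ->
  inA v x -> vge v f.[x] N -> vge v f^`().[x] m ->
  vge v (resultant f f^`()) (Num.min N (m + m)).
Proof.
move=> hf sf m0 N0 hx hfx hdx.
have hd := inA_coef_deriv hf.
set n := ((size f^`()).-1 + (size f).-1)%N.
have n1 : (1 < n)%N by rewrite /n; lia.
pose P (i : 'I_n) := match split i with inl k => f * 'X^k | inr k => f^`() * 'X^k end.
pose U (i : 'I_n) := if split i is inl k then x ^+ k else 0.
pose W (i : 'I_n) := if split i is inr k then x ^+ k else 0.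
pose D (i : 'I_n) := match split i with
  | inl k => f^`().[x] * x ^+ k + f.[x] * (x ^+ k.-1 *+ k)
  | inr k => f^`().[x] * (x ^+ k.-1 *+ k) end.
have hS i j : Sylvester_mx f f^`() i j = (P i)`_j.
  by rewrite Sylvester_mxE /P; case: (split i) => k; rewrite coefMXn leqNgt; case: ltnP.
have hP i : (size (P i) <= n)%N.
  rewrite /P; case: splitP => k _; apply: leq_trans (size_polyMleq _ _) _;
  by rewrite size_polyXn; move: (ltn_ord k); rewrite /n; lia.
pose i0 := Ordinal (ltnW n1); pose i1 := Ordinal n1.
rewrite /resultant (@det_coef_mx_jet _ _ _ P x i0 i1) //.
apply: (@vge_det_jet _ _ i0 i1 f.[x] f^`().[x] f^`()^`().[x] U W D) => //.
- exact: inA_horner (inA_coef_deriv hd) hx.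
- by move=> i; rewrite /U; case: (split i) => k; [apply: inAX | left].
- by move=> i; rewrite /W; case: (split i) => k; [left | apply: inAX].
- move=> i; rewrite /D; case: (split i) => k; last first.
    by apply: vge_le _ (vgeMr hdx (vgeMn _ (inAX _ hx))); rewrite ge_min lexx.
  apply: vgeD; first by apply: vge_le _ (vgeMr hdx (inAX _ hx)); rewrite ge_min lexx.
  by apply: vge_le _ (vgeMr hfx (vgeMn _ (inAX _ hx))); rewrite ge_min lexx orbT.
- move=> i k k0 k1; rewrite mxE (negPf k1) mxE (negPf k0) hS /P.
  by case: (split i) => j; rewrite coefMXn; case: ifP => _;
    [left | apply: hf | left | apply: hd].
- move=> i; rewrite !mxE /P /U /W; case: (split i) => k; rewrite hornerM hornerXn; ring.
- move=> i; rewrite !mxE eqxx /P /U /W /D; case: (split i) => k;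
  by rewrite derivM derivXn !hornerE hornerMn hornerXn /= ?add0r.
Qed.

Lemma vge_taylor (f : {poly K}) x y (k : int) :
  (forall i, inA v f`_i) -> 0 <= k -> inA v x -> vge v (y - x) k ->
  vge v (f.[y] - f.[x] - f^`().[x] * (y - x)) (k + k).
Proof.
move=> hf k0 hx hk; set h := y - x; have -> : y = x + h by rewrite /h addrC subrK.
have hA : inA v h := vge_le k0 hk.
rewrite (@nderiv_taylor_wide _ (size f).+2 _ _ _ (mulrC x h)); last first.
  exact: leqW (leqnSn _).
rewrite !big_ord_recl /= nderivn0 nderivn1 expr0 expr1 mulr1.
have -> (a b c : K) : a + (b + c) - a - b = c by ring.
apply: vge_sum => i _; rewrite /bump !add1n -addn2 exprD expr2.
apply: vgeMl; first by apply: inA_horner => //; apply: inA_coef_nderivn.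
by apply: vgeMl; [apply: inAX | apply: vgeM].
Qed.

(* With [k = v (y - x) > v f'(x)], the Taylor remainder has valuation
   [2k > v (f'(x) (y - x))], so [v (f'(x) (y - x)) >= v (f(y) - f(x)) >= N]. *)
Lemma close_roots_vge (f : {poly K}) x y (N h : int) :
  (forall i, inA v f`_i) -> inA v x -> vge v f.[x] N -> vge v f.[y] N ->
  f^`().[x] != 0 -> v f^`().[x] <= h -> 0 <= h ->
  vge v (y - x) (h + 1) -> vge v (y - x) (N - h).
Proof.
move=> hf hx hfx hfy a0 ah h0 ht.
case: (eqVneq (y - x) 0) => [->|t0]; first exact: vge0.
set k := v (y - x).
have hk : h + 1 <= k by case: ht => // /eqP; rewrite (negPf t0).
have k0 : 0 <= k by lia.
have hE := vge_taylor hf k0 hx (vge_val t0).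
have hD : vge v (f.[y] - f.[x]) N by apply: vgeB.
have hat : vge v (f^`().[x] * (y - x)) (Num.min N (k + k)).
  have -> : f^`().[x] * (y - x) =
    (f.[y] - f.[x]) - (f.[y] - f.[x] - f^`().[x] * (y - x)) by ring.
  by apply: vgeB; [apply: vge_le _ hD | apply: vge_le _ hE]; rewrite ge_min lexx ?orbT.
case: hat => [/eqP|]; first by rewrite mulf_eq0 (negPf a0) (negPf t0).
case: hv => hm _ _ _; rewrite hm // -/k => hmin; right.
by move: hmin; case: (lerP N (k + k)) => Nk; lia.
Qed.

Definition congv (n : int) (x y : K) : bool := (x - y == 0) || (n <= v (x - y)).

Lemma congvP n x y : reflect (vge v (x - y) n) (congv n x y).
Proof.
apply: (iffP orP) => [[/eqP|]|[->|]]; by [left | right | rewrite eqxx | right].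
Qed.

Lemma count_congv_le1 (N : nat) (s : seq K) y0 :
  (forall i j : nat, (i < j < size s)%N -> ~ vge v (nth 0 s i - nth 0 s j) N%:Z) ->
  (count (congv N%:Z ^~ y0) s <= 1)%N.
Proof.
elim: s => [|a s IH] hd //=.
case: (boolP (congv N a y0)) => /= ha; last first.
  by rewrite add0n; apply: IH => i j; apply: hd i.+1 j.+1.
suff -> : count (congv N ^~ y0) s = 0%N by [].
apply/eqP; rewrite -leqn0 leqNgt -has_count.
apply/hasPn => y ys; apply/negP => /congvP hy.
have hj : (0 < (index y s).+1 < size (a :: s))%N by rewrite /= ltnS index_mem.
apply: (hd _ _ hj) => /=; rewrite nth_index //.
have -> : a - y = (a - y0) - (y - y0) by ring.
by apply: vgeB => //; apply/congvP.
Qed.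

Lemma dval_deriv_root_le (f : {poly K}) (r N : nat) x :
  (forall i, inA v f`_i) -> f \is monic -> resultant f f^`() != 0 ->
  v (resultant f f^`()) = r%:Z -> (2 * r < N)%N ->
  inA v x -> vge v f.[x] N%:Z -> f^`().[x] != 0 /\ v f^`().[x] <= (r./2)%:Z.
Proof.
move=> hf hmon hres hr hN hx hfx.
have hr2 := odd_double_half r; rewrite -addnn in hr2.
have f0 := monic_neq0 hmon.
have hlead : f`_(size f).-1 = 1 by move/monicP: hmon.
case: (ltnP 2 (size f)) => sf; last first.
  have sd : (size f^`() <= 1)%N by rewrite -ltnS (leq_trans (lt_size_deriv f0)).
  rewrite (size1_polyC sd) hornerC coef_deriv mulr1n.
  case: (ltnP 1 (size f)) => sf1.
    by rewrite (_ : 1%N = (size f).-1) ?hlead ?oner_neq0 ?dval1 //; lia.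
  move: hfx; rewrite (size1_polyC sf1) hornerC.
  have -> : f`_0 = 1 by rewrite -hlead (_ : (size f).-1 = 0%N) //; lia.
  by case=> [/eqP|]; rewrite ?oner_eq0 ?dval1 //; lia.
have hdouble m : 0 <= m -> vge v f^`().[x] m -> m + m <= r%:Z.
  have N0 : 0 <= N%:Z by [].
  move=> m0 /(vge_resultant_deriv hf sf m0 N0 hx hfx) [/eqP|].
    by rewrite (negPf hres).
  by rewrite hr; case: (lerP N%:Z (m + m)) => _; lia.
case: (eqVneq f^`().[x] 0) => [a0|a0].
  by have := hdouble (r + 1)%:Z isT (or_introl a0); lia.
have m0 : 0 <= v f^`().[x].
  by case: (inA_horner (inA_coef_deriv hf) hx) => // /eqP; rewrite (negPf a0).
by split=> //; have := hdouble _ m0 (vge_val a0); lia.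
Qed.

Section ResidueCount.
Variable q : nat.
Hypothesis hq : residue_card v q.

(* Every element of [s] lies in one of the [q] classes of [x0 + a pi^m]
   mod [pi^(m+1)], [a] running over the residue representatives; recurse on
   each class. *)
Lemma size_le_subclasses (B k m : nat) (s : seq K) :
  {in s &, forall x y, vge v (x - y) m%:Z} ->
  {in s, forall x0, count (congv (m + k)%N%:Z ^~ x0) s <= B}%N ->
  (size s <= q ^ k * B)%N.
Proof.
elim: k m s => [|k IH] m [|x0 s0] //; set s := x0 :: s0 => hs hB.
  rewrite expn0 mul1n; apply: leq_trans (hB x0 (mem_head _ _)).
  rewrite addn0 -count_predT; apply: eq_leq; apply: eq_in_count => y ys /=.
  by symmetry; apply/congvP; apply: hs => //; rewrite mem_head.
have x0s : x0 \in s by rewrite mem_head.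
case: hq => reps [hsz _ _ hrep].
pose cls a := congv m.+1%:Z ^~ (x0 + a * pi ^+ m).
apply: leq_trans (size_le_sum_count (P := cls) (reps := reps) _) _.
  move=> y ys; have [z hz ez] := vge_piX_dvd (hs _ _ ys x0s).
  have [a ar ha] := hrep z hz; apply/hasP; exists a => //; apply/congvP.
  rewrite (_ : y - _ = pi ^+ m * (z - a)); last by rewrite mulrBr -ez; ring.
  have [p0 vp] := dval_piX m.
  by apply: vge_le _ (vgeM (vge_val p0) ha); rewrite vp; lia.
apply: (@leq_trans (\sum_(a <- reps) q ^ k * B)); last first.
  by rewrite big_const_seq count_predT iter_addn_0 mulnC hsz expnS mulnA.
rewrite leq_sum // => a _; rewrite -size_filter; apply: (IH m.+1).
  move=> x y; rewrite !mem_filter => /andP [/congvP hx _] /andP [/congvP hy _].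
  have -> : x - y = (x - (x0 + a * pi ^+ m)) - (y - (x0 + a * pi ^+ m)) by ring.
  exact: vgeB.
move=> y0; rewrite mem_filter => /andP [_ y0s].
rewrite count_filter; apply: leq_trans (hB _ y0s).
by rewrite addSnnS; apply: sub_count => y /andP [].
Qed.

Lemma count_near_root_le (f : {poly K}) (N h : nat) (s : seq K) x0 :
  (forall i, inA v f`_i) -> distinct_roots_mod v f N s ->
  (h <= N)%N -> f^`().[x0] != 0 -> v f^`().[x0] <= h%:Z -> x0 \in s ->
  (count (congv h.+1%:Z ^~ x0) s <= q ^ h)%N.
Proof.
move=> hf [hsA hsf hsd] hhN a0 ah x0s.
rewrite -size_filter -[(q ^ h)%N]muln1.
have hfar y : y \in [seq y <- s | congv h.+1 y x0] -> vge v (y - x0) (N - h)%N%:Z.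
  rewrite mem_filter => /andP [/congvP hy ys]; rewrite -subzn //.
  apply: close_roots_vge (hsA _ x0s) (hsf _ x0s) (hsf _ ys) a0 ah _ _ => //.
  by rewrite -addn1 PoszD in hy.
apply: (size_le_subclasses (m := (N - h)%N)).
  move=> y z yt zt; have -> : y - z = (y - x0) - (z - x0) by ring.
  exact: vgeB (hfar _ yt) (hfar _ zt).
move=> y0 _; rewrite subnK // count_filter; apply: leq_trans (count_congv_le1 y0 hsd).
by apply: sub_count => y /andP [].
Qed.

End ResidueCount.

End Valuation.

Theorem corollary3p12 (K : fieldType) (v : K -> int) (pi : K) (q : nat)
  (hv : is_normalized_dval v pi) (hcomp : dval_complete v)
  (hq : residue_card v q)
  (f : {poly K}) (hfA : forall i : nat, inA v f`_i) (hmon : f \is monic)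
  (hdisc : resultant f f^`() != 0)
  (r : nat) (hr : v (resultant f f^`()) = r%:Z)
  (N : nat) (hN : (2 * r < N)%N)
  (s : seq K) (hs : distinct_roots_mod v f N s) :
  (size s <= q ^ (r + r./2 + 1))%N.
Proof.
have hr2 := odd_double_half r; rewrite -addnn in hr2.
have q0 : (0 < q)%N.
  case: (hq) => reps [<- _ _ /(_ 0 (vge0 _ _)) [a]]; by case: reps.
have [hsA hsf _] := hs.
apply: leq_trans (size_le_subclasses hv hq (B := q ^ r./2) (k := r./2.+1) (m := 0) _ _) _.
- by move=> x y xs ys; have := vgeB hv (hsA _ xs) (hsA _ ys).
- move=> x xs; rewrite add0n.
  have [a0 ah] := dval_deriv_root_le hv hfA hmon hdisc hr hN (hsA _ xs) (hsf _ xs).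
  have hhN : (r./2 <= N)%N by lia.
  by have := count_near_root_le hv hq hfA hs hhN a0 ah xs.
- by rewrite -expnD leq_pexp2l //; lia.
Qed.
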